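(* Let $G$ be a finite abelian group of order $mn$, let $N \le G$ be a subgroup of order $n$, and let $D \subseteq G$ be a semiregular $(m,n,k,\lambda_1,\lambda_2)$-divisible difference set in $G$ relative to $N$. Let $\{\eta_j\}_{j=1}^m$ be an enumeration of $N^\perp$, let $\{\chi_i\}_{i=1}^n$ be a set of coset representatives of $\widehat{G}/N^\perp$, and for $1\le i\le n$, $1\le j\le m$ let $e^i_j := \frac{1}{\sqrt{k}}((\chi_i\eta_j)(g))_{g\in D}\in\mathbb{C}^k$ and $\mathcal{W}_i=\operatorname{span}\{e^i_j\}_{j=1}^m$. Let $\{h_\ell\}_{\ell=1}^m$ be a set of coset representatives of $G/N$ and define the $m\times m$ matrix \[ U=\frac{1}{\sqrt{m}}\big(\eta_j(h_\ell)\big)_{\ell,j=1}^m \] (row index $\ell$, column index $j$). For each $i$ define $\tilde L_i=(\tilde e^i_1|\cdots|\tilde e^i_m):=(e^i_1|\cdots|e^i_m)\,U^*$. Then for all $i\in\{1,\dots,n\}$, $\mathcal{W}_i=\operatorname{span}\{\tilde e^i_j\}_{j=1}^m$, the vectors $\{\tilde e^i_j\}_{j=1,i=1}^{m,n}$ are almost flat, and each vector $\tilde e^i_j$ has exactly $k/m$ nonzero coordinates.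
   Context: $\widehat{G}$ is the group of characters (homomorphisms $G\to\{z\in\mathbb{C}:|z|=1\}$) of $G$, and $N^\perp=\{\chi\in\widehat{G}:\chi(h)=1\ \forall h\in N\}$. A subset $D\subseteq G$ with $|D|=k$ is an $(m,n,k,\lambda_1,\lambda_2)$-divisible difference set relative to $N$ (with $|G|=mn$, $|N|=n$) if the multiset $\{d-d': d,d'\in D,d\ne d'\}$ contains each element of $G\setminus N$ exactly $\lambda_2$ times and each element of $N\setminus\{0\}$ exactly $\lambda_1$ times; it is semiregular if $k>\lambda_1$ and $k^2=\lambda_2mn$. A collection of vectors is almost flat if all nonzero coordinates of all the vectors have the same modulus. *)

(* G is a finite abelian group written multiplicatively
   (the whole type gT); complex numbers are algC. *)
From HB Require Import structures.
From mathcomp Require Import all_boot all_order all_algebra all_fingroup all_field.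
Set Implicit Arguments. Unset Strict Implicit. Unset Printing Implicit Defensive.
Import Order.TTheory GRing.Theory Num.Theory.
Local Open Scope ring_scope.

Section Defs.
Variable gT : finGroupType.

Definition is_character (chi : {ffun gT -> algC}) : Prop :=
  (forall x y : gT, chi (x * y)%g = chi x * chi y) /\ (forall x : gT, `|chi x| = 1).

Definition in_perp (N : {set gT}) (chi : {ffun gT -> algC}) : Prop :=
  is_character chi /\ (forall h, h \in N -> chi h = 1).

(* number of ordered pairs (d,d') in D x D, d <> d', with d - d' = g
   (additive "d - d'" is "d * d'^-1" in multiplicative notation) *)
Definition diff_count (D : {set gT}) (g : gT) : nat :=
  #|[set p in setX D D | (p.1 != p.2) && ((p.1 * p.2^-1)%g == g)]|.

Definition is_divisible_diff_set (m n k l1 l2 : nat) (N : {set gT}) (D : {set gT}) : Prop :=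
  [/\ #|gT| = (m * n)%N, #|N| = n, #|D| = k,
      (forall g, g \notin N -> diff_count D g = l2) &
      (forall g, g \in N -> g != 1%g -> diff_count D g = l1)].

Definition is_semiregular_DDS (m n k l1 l2 : nat) (N : {set gT}) (D : {set gT}) : Prop :=
  [/\ is_divisible_diff_set m n k l1 l2 N D, (l1 < k)%N & (k ^ 2 = l2 * m * n)%N].

(* The matrix (e^i_1 | ... | e^i_m): column j is e^i_j in C^k, coordinates
   indexed by the elements of D (through enum_val). *)
Definition Lmat (D : {set gT}) (m : nat) (chi : {ffun gT -> algC})
  (eta : 'I_m -> {ffun gT -> algC}) : 'M[algC]_(#|D|, m) :=
  \matrix_(t < #|D|, j < m) ((chi (enum_val t) * eta j (enum_val t)) / sqrtC (#|D|%:R)).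

Definition Umat (m : nat) (eta : 'I_m -> {ffun gT -> algC}) (h : 'I_m -> gT) : 'M[algC]_m :=
  \matrix_(l < m, j < m) (eta j (h l) / sqrtC (m%:R)).

Definition adjmx (p q : nat) (A : 'M[algC]_(p, q)) : 'M[algC]_(q, p) :=
  (map_mx (fun x : algC => x^*) A)^T.

Definition Ltilde (D : {set gT}) (m : nat) (chi : {ffun gT -> algC})
  (eta : 'I_m -> {ffun gT -> algC}) (h : 'I_m -> gT) : 'M[algC]_(#|D|, m) :=
  Lmat D chi eta *m adjmx (Umat eta h).

End Defs.

From HB Require Import structures.
From mathcomp Require Import all_boot all_order all_algebra all_fingroup all_field.
From mathcomp Require Import ring zify.
Import Order.TTheory GRing.Theory Num.Theory.
Local Open Scope ring_scope.

(* Let c(g) be the index l of the coset h_l N containing g. A character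
   trivial on N is constant on cosets, so the columns of U are orthonormal
   (orthogonality of the characters of G/N) and U is unitary. Row d of L_i is
   chi_i(d) sqrt(m/k) times row c(d) of U, hence L~_i = L_i U^* has in row d
   the single nonzero entry chi_i(d) sqrt(m/k), in column c(d). This gives the
   span and flatness claims, and shows that the support of e~^i_j is
   D /\ h_j N. Counting the pairs of D lying in a common coset of N with the
   parameters of D gives sum_j |D /\ h_j N|^2 = k^2/m, while
   sum_j |D /\ h_j N| = k; equality in Cauchy-Schwarz forces every
   |D /\ h_j N| to equal k/m. *)

Lemma const_of_sum_sqr_eq (m : nat) (a : 'I_m -> nat) :
  ((\sum_j a j ^ 2) * m = (\sum_j a j) ^ 2)%N ->
  forall j, (a j * m = \sum_j a j)%N.
Proof.
set S := (\sum_j a j)%N => sqS.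
have sum_dev2 : \sum_j ((a j * m)%:R - S%:R) ^+ 2 = 0 :> int.
  have expand j : ((a j * m)%:R - S%:R) ^+ 2 =
      (a j ^ 2)%:R * m%:R ^+ 2 - (a j)%:R * (2 * m%:R * S%:R) + S%:R ^+ 2 :> int.
    by rewrite natrX natrM; ring.
  under eq_bigr do rewrite expand.
  rewrite big_split sumrB /= -!mulr_suml sumr_const card_ord -!natr_sum -/S.
  have := congr1 (fun x : nat => x%:R : int) sqS; rewrite natrM natrX => sqSZ.
  by rewrite expr2 mulrA sqSZ -mulr_natr; ring.
move=> j; have dev2_ge0 i : true -> 0 <= ((a i * m)%:R - S%:R) ^+ 2 :> int.
  by rewrite sqr_ge0.
have /eqP := psumr_eq0P dev2_ge0 sum_dev2 (i := j) isT.
by rewrite sqrf_eq0 subr_eq0 eqr_nat => /eqP.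
Qed.

Lemma card_in_fibers {T J : finType} (S : {set T}) (f : T -> J) (P : pred J) :
  #|[set x in S | P (f x)]| = (\sum_(j | P j) #|[set x in S | f x == j]|)%N.
Proof.
rewrite -sum1_card (partition_big f P); last by move=> x; rewrite inE => /andP[].
apply: eq_bigr => j Pj; rewrite -sum1_card; apply: eq_bigl => x; rewrite !inE.
by case: eqP => [->|]; rewrite ?Pj ?andbT ?andbF.
Qed.

Lemma card_fibers {T J : finType} (S : {set T}) (f : T -> J) :
  #|S| = (\sum_j #|[set x in S | f x == j]|)%N.
Proof. by rewrite -(card_in_fibers S f predT); apply: eq_card => x; rewrite !inE andbT. Qed.

Lemma card_pairs_same_fiber {T J : finType} (S : {set T}) (f : T -> J) :
  #|[set p in setX S S | f p.1 == f p.2]| = (\sum_j #|[set x in S | f x == j]| ^ 2)%N.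
Proof.
rewrite (card_fibers [set p in setX S S | f p.1 == f p.2] (fun p => f p.1)).
apply: eq_bigr => j _; rewrite -mulnn -cardsX; apply: eq_card => -[x y]; rewrite !inE /=.
case: (x \in S) (y \in S) => [] [] /=; rewrite ?andbF //.
by case: (eqVneq (f x) j) => [->|_]; rewrite ?andbF // andbT eq_sym.
Qed.

Lemma card_enum_val_set {T : finType} (A : {set T}) (P : pred T) :
  #|[set t : 'I_#|A| | P (enum_val t)]| = #|[set x in A | P x]|.
Proof.
rewrite -(card_imset _ enum_val_inj); apply: eq_card => x; rewrite inE.
apply/imsetP/andP => [[t + ->]|[xA Px]]; first by rewrite inE enum_valP.
by exists (enum_rank_in xA x); rewrite ?inE enum_rankK_in.
Qed.

Section PairDifferences.
Context {gT : finGroupType} (D : {set gT}).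

Definition pair_diff_count (g : gT) : nat :=
  #|[set p in setX D D | (p.1 * p.2^-1)%g == g]|.

Lemma pair_diff_count1 : pair_diff_count 1%g = #|D|.
Proof.
have diag_inj : injective (fun x : gT => (x, x)) by move=> x y [].
rewrite /pair_diff_count -(card_imset (mem D) diag_inj).
apply: eq_card => -[x y]; rewrite !inE /= divg_eq1.
apply/idP/imsetP => [/andP[/andP[xD _] /eqP <-]|[z zD [-> ->]]]; first by exists x.
by rewrite zD eqxx.
Qed.

Lemma pair_diff_count_neq1 g : g != 1%g -> pair_diff_count g = diff_count D g.
Proof.
move=> g_neq1; apply: eq_card => -[x y]; rewrite !inE /=.
case: (eqVneq (x * y^-1)%g g) => [xy_g|]; rewrite ?andbF ?andbT //.
case: (eqVneq x y) => [x_y|]; rewrite ?andbT //.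
by move: g_neq1; rewrite -xy_g x_y mulgV eqxx.
Qed.

Lemma card_pairs_diff_in (A : {pred gT}) :
  #|[set p in setX D D | (p.1 * p.2^-1)%g \in A]| = (\sum_(g in A) pair_diff_count g)%N.
Proof. exact: card_in_fibers. Qed.

Lemma sum_pair_diff_count : (\sum_g pair_diff_count g)%N = (#|D| ^ 2)%N.
Proof. by rewrite -(card_fibers _ (fun p : gT * gT => (p.1 * p.2^-1)%g)) cardsX mulnn. Qed.

End PairDifferences.

Section DivisibleDifferenceSets.
Context {gT : finGroupType} {m n k l1 l2 : nat} {N : {group gT}} {D : {set gT}}.

Lemma dds_card_pairs_diff_in : is_divisible_diff_set m n k l1 l2 N D ->
  #|[set p in setX D D | (p.1 * p.2^-1)%g \in N]| = (k + n.-1 * l1)%N.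
Proof.
case=> _ cardN cardD _ dc_in.
rewrite card_pairs_diff_in (bigD1 1%g) //= pair_diff_count1 cardD.
congr (_ + _)%N; rewrite -cardN (cardsD1 1%g N) group1 /= -sum_nat_const.
apply: eq_big => [g|g /andP[gN g_neq1]]; first by rewrite !inE andbC.
by rewrite pair_diff_count_neq1 // dc_in.
Qed.

Lemma dds_sqr_card : is_divisible_diff_set m n k l1 l2 N D ->
  (k ^ 2 = k + n.-1 * l1 + (m * n - n) * l2)%N.
Proof.
move=> dds; have [cardG cardN cardD dc_out _] := dds.
rewrite -{1}cardD -sum_pair_diff_count (bigID (mem N)) /= -card_pairs_diff_in.
rewrite dds_card_pairs_diff_in // -cardG -cardN -(cardsC N) addKn -sum_nat_const.
congr (_ + _)%N; apply: eq_big => [g|g gN]; first by rewrite !inE.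
by rewrite pair_diff_count_neq1 ?dc_out //; apply: contraNneq gN => ->.
Qed.

Lemma semiregular_card_pairs_diff_in : is_semiregular_DDS m n k l1 l2 N D ->
  (#|[set p in setX D D | (p.1 * p.2^-1)%g \in N]| * m = k ^ 2)%N.
Proof.
case=> dds _ sqr_k; rewrite dds_card_pairs_diff_in //.
have [m0|m_gt0] := posnP m; first by rewrite sqr_k m0 !(muln0, mul0n).
(* k + (n-1) l1 + (mn - n) l2 = k^2 = l2 mn forces k + (n-1) l1 = l2 n. *)
have := dds_sqr_card dds; rewrite mulnBl {1}sqr_k; nia.
Qed.

End DivisibleDifferenceSets.

Section Characters.
Context {gT : finGroupType} {N : {group gT}}.
Implicit Types (a b psi : {ffun gT -> algC}).

Lemma character_neq0 psi x : is_character psi -> psi x != 0.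
Proof. by case=> _ norm1; rewrite -normr_eq0 norm1 oner_eq0. Qed.

Lemma character_conjC_mul psi x : is_character psi -> (psi x)^* * psi x = 1.
Proof. by case=> _ norm1; rewrite -normCKC norm1 expr1n. Qed.

Lemma character_conjC_mul_eq1 a b x :
  is_character a -> ((a x)^* * b x == 1) = (b x == a x).
Proof.
move=> char_a; apply/eqP/eqP => [|->]; last exact: character_conjC_mul.
move/(congr1 ( *%R (a x))); rewrite mulrA mulr1 [a x * _]mulrC.
by rewrite character_conjC_mul ?mul1r.
Qed.

Lemma in_perp_conjC_mul {a b} :
  in_perp N a -> in_perp N b -> in_perp N [ffun x => (a x)^* * b x].
Proof.
move=> [[aM a1] aN] [[bM b1] bN]; split; first split.
- by move=> x y; rewrite !ffunE aM bM rmorphM /= mulrACA.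
- by move=> x; rewrite ffunE normrM norm_conjC a1 b1 mulr1.
- by move=> x xN; rewrite ffunE aN // bN // conjC1 mulr1.
Qed.

Lemma in_perp_mulr {psi} x y : in_perp N psi -> y \in N -> psi (x * y)%g = psi x.
Proof. by move=> [[psiM _] psiN] yN; rewrite psiM (psiN y yN) mulr1. Qed.

End Characters.

Lemma adjmxE p q (A : 'M[algC]_(p, q)) : adjmx A = (A ^t*)%sesqui.
Proof. by rewrite /adjmx map_trmx. Qed.

Section Transversal.
Context {gT : finGroupType} {m : nat} {N : {group gT}} {h : 'I_m -> gT}.
Hypothesis h_transversal : forall g, exists! l, ((h l)^-1 * g)%g \in N.

Fact transversal_cover g : exists l, ((h l)^-1 * g)%g \in N.
Proof. by have [l [hl _]] := h_transversal g; exists l. Qed.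

Definition coset_index g : 'I_m := xchoose (transversal_cover g).

Lemma coset_indexP g : ((h (coset_index g))^-1 * g)%g \in N.
Proof. exact: xchooseP (transversal_cover g). Qed.

Lemma coset_index_eq g l : ((h l)^-1 * g)%g \in N -> coset_index g = l.
Proof.
have [l0 [_ l0_uniq]] := h_transversal g => hl.
by rewrite -(l0_uniq _ hl) (l0_uniq _ (coset_indexP g)).
Qed.

Lemma coset_index_rep l : coset_index (h l) = l.
Proof. by apply: coset_index_eq; rewrite mulVg group1. Qed.

Lemma eq_coset_index x y : (coset_index x == coset_index y) = (x^-1 * y \in N)%g.
Proof.
apply/eqP/idP => [cxy|xyN].
  have := groupM (groupVr (coset_indexP x)) (coset_indexP y).
  by rewrite cxy invMg invgK -mulgA mulKVg.
apply/esym/coset_index_eq; rewrite -[y](mulKVg x) mulgA groupM //.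
exact: coset_indexP.
Qed.

Lemma card_pairs_same_coset (D : {set gT}) : abelian [set: gT] ->
  #|[set p in setX D D | coset_index p.1 == coset_index p.2]| =
  #|[set p in setX D D | (p.1 * p.2^-1)%g \in N]|.
Proof.
move=> /centsP G_abelian; apply: eq_card => -[x y]; rewrite !inE eq_coset_index /=.
by rewrite -groupV invMg invgK (G_abelian (y^-1)%g) ?inE.
Qed.

Lemma in_perp_coset_index psi x : in_perp N psi -> psi x = psi (h (coset_index x)).
Proof.
move=> perp; rewrite -{1}(mulKVg (h (coset_index x)) x).
by rewrite (in_perp_mulr _ _ perp) ?coset_indexP.
Qed.

Lemma sum_in_perp_transversal {psi y} : in_perp N psi -> psi y != 1 ->
  \sum_l psi (h l) = 0.
Proof.
move=> perp psi_y; pose shift l := coset_index (y * h l)%g.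
have shift_inj : injective shift.
  move=> l l' /eqP; rewrite eq_coset_index invMg -mulgA mulKg.
  by rewrite -eq_coset_index !coset_index_rep => /eqP.
have sum_eq : \sum_l psi (h l) = psi y * \sum_l psi (h l).
  rewrite {1}(reindex_inj shift_inj) mulr_sumr; apply: eq_bigr => l _.
  by rewrite -in_perp_coset_index // perp.1.1.
apply/eqP; move/eqP: sum_eq; rewrite -subr_eq0 -{1}[\sum_l _]mul1r -mulrBl.
by rewrite mulf_eq0 subr_eq0 eq_sym (negbTE psi_y).
Qed.

Lemma sum_transversal_conjC_mul a b : in_perp N a -> in_perp N b ->
  \sum_l (a (h l))^* * b (h l) = (a == b)%:R * m%:R.
Proof.
move=> perp_a perp_b; have [<-|a_neq_b] := eqVneq a b.
  rewrite mul1r -[m in RHS]card_ord -sumr_const; apply: eq_bigr => l _.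
  by apply: character_conjC_mul; case: perp_a.
have /existsP[y b_y] : [exists y, b y != a y].
  apply: contraR a_neq_b => /existsPn eq_ab.
  by apply/eqP/ffunP => x; apply/esym/eqP/negPn/eq_ab.
have psi_y : [ffun x => (a x)^* * b x] y != 1.
  by rewrite ffunE character_conjC_mul_eq1 //; case: perp_a.
rewrite mul0r -[RHS](sum_in_perp_transversal (in_perp_conjC_mul perp_a perp_b) psi_y).
by apply: eq_bigr => l _; rewrite ffunE.
Qed.

Context {eta : 'I_m -> {ffun gT -> algC}}.
Hypotheses (eta_inj : injective eta) (eta_perp : forall j, in_perp N (eta j)).

Lemma adjmx_Umat_unitary : adjmx (Umat eta h) \is unitarymx.
Proof.
apply/unitarymxP; rewrite adjmxE trmxCK; apply/matrixP => i j; rewrite !mxE.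
have s_real : (sqrtC m%:R)^* = sqrtC m%:R :> algC by rewrite geC0_conj ?sqrtC_ge0 ?ler0n.
have m_neq0 : m%:R != 0 :> algC by rewrite pnatr_eq0 -lt0n (leq_ltn_trans _ (ltn_ord i)).
under eq_bigr => l _ do rewrite !mxE rmorphM fmorphV /= s_real mulrACA -invfM -expr2 sqrtCK.
by rewrite -mulr_suml sum_transversal_conjC_mul // (inj_eq eta_inj) mulfK.
Qed.

Lemma Umat_unitary : Umat eta h \is unitarymx.
Proof. by rewrite -trmxC_unitary -adjmxE adjmx_Umat_unitary. Qed.

Variables (D : {set gT}) (chi : {ffun gT -> algC}).

Definition coset_mx : 'M[algC]_(#|D|, m) :=
  \matrix_(t, j) (chi (enum_val t) * (coset_index (enum_val t) == j)%:R).

Lemma Lmat_coset_mx :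
  Lmat D chi eta = (sqrtC m%:R / sqrtC #|D|%:R) *: (coset_mx *m Umat eta h).
Proof.
apply/matrixP => t j; rewrite !mxE (bigD1 (coset_index (enum_val t))) //= big1.
  rewrite !mxE eqxx mulr1 addr0 -in_perp_coset_index //.
  have s_neq0 : sqrtC m%:R != 0 :> algC.
    by rewrite sqrtC_eq0 pnatr_eq0 -lt0n (leq_ltn_trans _ (ltn_ord j)).
  have r_neq0 : sqrtC #|D|%:R != 0 :> algC.
    by rewrite sqrtC_eq0 pnatr_eq0 -lt0n (leq_ltn_trans _ (ltn_ord t)).
  by field; rewrite s_neq0.
by move=> l l_neq; rewrite !mxE eq_sym (negbTE l_neq) mulr0 mul0r.
Qed.

Lemma Ltilde_coset_mx :
  Ltilde D chi eta h = (sqrtC m%:R / sqrtC #|D|%:R) *: coset_mx.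
Proof. by rewrite /Ltilde Lmat_coset_mx -scalemxAl adjmxE mulmxtVK // Umat_unitary. Qed.

Hypothesis chi_char : is_character chi.

Lemma Ltilde_neq0 t j : (Ltilde D chi eta h t j != 0) = (coset_index (enum_val t) == j).
Proof.
rewrite Ltilde_coset_mx !mxE; case: (_ == j) => /=; rewrite ?mulr0 ?eqxx // mulr1.
rewrite !mulf_neq0 ?invr_eq0 ?character_neq0 // sqrtC_eq0 pnatr_eq0 -lt0n.
  exact: leq_ltn_trans (ltn_ord j).
exact: leq_ltn_trans (ltn_ord t).
Qed.

Lemma normr_Ltilde t j : Ltilde D chi eta h t j != 0 ->
  `|Ltilde D chi eta h t j| = sqrtC m%:R / sqrtC #|D|%:R.
Proof.
rewrite Ltilde_neq0 Ltilde_coset_mx !mxE => /eqP ->; rewrite eqxx mulr1 normrM.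
by rewrite chi_char.2 mulr1 ger0_norm // divr_ge0 ?sqrtC_ge0 ?ler0n.
Qed.

Lemma card_Ltilde_neq0 j :
  #|[set t | Ltilde D chi eta h t j != 0]| = #|[set d in D | coset_index d == j]|.
Proof. by rewrite -card_enum_val_set; apply: eq_card => t; rewrite !inE Ltilde_neq0. Qed.

End Transversal.

Theorem mainTheorem2 (gT : finGroupType) (m n k l1 l2 : nat)
  (N : {group gT}) (D : {set gT})
  (eta : 'I_m -> {ffun gT -> algC}) (chi : 'I_n -> {ffun gT -> algC})
  (h : 'I_m -> gT) :
  abelian [set: gT] ->
  is_semiregular_DDS m n k l1 l2 N D ->
  (* {eta_j} is an enumeration of N^perp *)
  injective eta ->
  (forall j, in_perp N (eta j)) ->
  (forall psi, in_perp N psi -> exists j, eta j = psi) ->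
  (* {chi_i} is a set of coset representatives of Ghat / N^perp *)
  (forall i, is_character (chi i)) ->
  (forall psi, is_character psi ->
     exists! i, forall x, x \in N -> psi x = chi i x) ->
  (* {h_l} is a set of coset representatives of G / N *)
  (forall g : gT, exists! l, ((h l)^-1 * g)%g \in N) ->
  [/\ (* W_i = span of the columns of L_i equals span of the columns of tilde L_i *)
      (forall i, ((Lmat D (chi i) eta)^T == (Ltilde D (chi i) eta h)^T)%MS),
      (* almost flat: all nonzero coordinates of all tilde e^i_j have equal modulus *)
      (exists c : algC, forall i j t, Ltilde D (chi i) eta h t j != 0 ->
          `|Ltilde D (chi i) eta h t j| = c) &
      (* each tilde e^i_j has exactly k/m nonzero coordinates *)
      (forall i j, (#|[set t | Ltilde D (chi i) eta h t j != 0%R]| * m)%N = k)].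
Proof.
move=> G_abelian sr_dds eta_inj eta_perp _ chi_char _ h_transversal.
have [[_ _ cardD _ _] _ _] := sr_dds.
pose a j := #|[set d in D | coset_index h_transversal d == j]|.
have sum_a : (\sum_j a j)%N = k.
  by rewrite -cardD (card_fibers D (coset_index h_transversal)).
have sum_a2 : ((\sum_j a j ^ 2) * m = (\sum_j a j) ^ 2)%N.
  rewrite sum_a -(semiregular_card_pairs_diff_in sr_dds).
  by rewrite -(card_pairs_same_coset h_transversal) // card_pairs_same_fiber.
split.
- move=> i; rewrite /Ltilde trmx_mul; apply/eqmxP/eqmx_sym/eqmxMfull.
  rewrite row_full_unit unitmx_tr unitarymx_unit //.
  exact: (adjmx_Umat_unitary h_transversal eta_inj eta_perp).
- exists (sqrtC m%:R / sqrtC #|D|%:R) => i j t.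
  exact: (normr_Ltilde h_transversal eta_inj eta_perp D (chi i) (chi_char i)).
- move=> i j; rewrite (card_Ltilde_neq0 h_transversal eta_inj eta_perp) // -sum_a.
  exact: const_of_sum_sqr_eq.
Qed.
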